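(* In the setting described in the context, let $D\subseteq A\subseteq D\cup T$. Let $L\in\Pi_A$ with $\dim\operatorname{span}\langle L,L^*\rangle_A=2|L|-1$. Let $[e_1,e_2]\in T\setminus A$ with $e_1\in L$. Then $[e_1,e_2]\notin\operatorname{span}\langle L,L^*\rangle_A$ if and only if $e_2\notin L^*_A$.
   Context: Let $n\ge4$, $V=\{0,\dots,n-1\}$, and let $E=\{(u,v)\in V\times V:u\ne v\}$ be the set of arcs, written $uv$. Let $\chi_e\in\mathbb R^E$ be unit vectors and $\chi_F=\sum_{e\in F}\chi_e$. Let $\delta^\pm(w)$ be the arcs leaving/entering $w$, let $\delta^+(S)=\{uv:u\in S,v\notin S\}$, let $\mathcal S=\{S\subset V:2\le|S|\le n-2\}$, and let $x(F)=\sum_{e\in F}x_e$. The polytope is $P^n=\{x\in\mathbb R^E: x(\delta^+(w))=x(\delta^-(w))=1\ \forall w,\ x(\delta^+(S))\ge1\ \forall S\in\mathcal S,\ x\ge0\}$. Fix $\bar x\in P^n\cap\{0,\tfrac12\}^E$ and let $E_{\bar x}=\{e:\bar x_e=\tfrac12\}$. For $a\in\{0,1\}^E$ let $\mathrm{pr}(a)=\sum_{e\in E_{\bar x}}a_e\chi_e$. Let $\mathcal S_{\bar x}=\{S\in\mathcal S:\bar x(\delta^+(S))=1\}$. Define the sets $$D=\{\mathrm{pr}(\chi_{\delta^+(u)}),\mathrm{pr}(\chi_{\delta^-(u)}):u\in V\}, \qquad T=\{\mathrm{pr}(\chi_{\delta^+(S)}):S\in\mathcal S_{\bar x}\}.$$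 Every vector of $D\cup T$ equals $\chi_{e_1}+\chi_{e_2}$ for two distinct arcs $e_1,e_2\in E_{\bar x}$; it is written $[e_1,e_2]=[e_2,e_1]$. Let $A$ be a set with $D\subseteq A\subseteq D\cup T$. On $E_{\bar x}$ define the relation $e\sim_A e'$ iff there is $\bar e\in E_{\bar x}$ with $[e,\bar e]\in A$ and $[\bar e,e']\in A$. Let $\equiv_A$ be its transitive closure; this is an equivalence relation. The equivalence classes are called circuits, and they form the circuit partition $\Pi_A$ of $E_{\bar x}$. For $L\in\Pi_A$, the set $\{\bar e\in E_{\bar x}:\exists e\in L,\ [e,\bar e]\in A\}$ is nonempty and contained in a unique circuit, denoted $L^*_A$ and called the dual of $L$. The pair $\{L,L^*_A\}$ is a circuit pair. $L$ is called shorted if $L^*_A=L$. Define $\langle L,L^*\rangle_A=\{[e,\bar e]\in A: e\in L,\ \bar e\in L^*_A\}$. *)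

(* Vectors of R^E are finite functions {ffun darc n -> R^o},
   which carry a canonical vectType structure (vector.v). *)
From HB Require Import structures.
From mathcomp Require Import all_boot all_order all_algebra.
Set Implicit Arguments. Unset Strict Implicit. Unset Printing Implicit Defensive.
Import Order.TTheory GRing.Theory Num.Theory.
Local Open Scope ring_scope.

(* arcs of the complete digraph on V = {0,...,n-1}: ordered pairs (u,v), u <> v *)
Definition darc (n : nat) := {p : 'I_n * 'I_n | p.1 != p.2}.

Section Setting.
Variable n : nat.
Variable R : realFieldType.

Definition tail (e : darc n) : 'I_n := (val e).1.
Definition head (e : darc n) : 'I_n := (val e).2.

Definition dout (w : 'I_n) : {set darc n} := [set e | tail e == w].
Definition din (w : 'I_n) : {set darc n} := [set e | head e == w].
Definition doutS (S : {set 'I_n}) : {set darc n} :=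
  [set e | (tail e \in S) && (head e \notin S)].

Definition xsum (x : darc n -> R) (F : {set darc n}) : R := \sum_(e in F) x e.

Definition inS (S : {set 'I_n}) : bool := (2 <= #|S|)%N && (#|S| <= n - 2)%N.

Definition inPn (x : darc n -> R) : Prop :=
  [/\ forall w, xsum x (dout w) = 1,
      forall w, xsum x (din w) = 1,
      forall S, inS S -> 1 <= xsum x (doutS S)
    & forall e, 0 <= x e].

Definition half_integral (x : darc n -> R) : Prop :=
  forall e, x e = 0 \/ x e = 2^-1.

Definition vec := {ffun darc n -> R^o}.

Definition chi (F : {set darc n}) : vec := [ffun e => (e \in F)%:R].
Definition chi1 (e : darc n) : vec := chi [set e].

Variable x : darc n -> R.

Definition Ex : {set darc n} := [set e | x e == 2^-1].

Definition pr (a : vec) : vec := [ffun e => if e \in Ex then a e else 0].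

Definition inSx (S : {set 'I_n}) : bool := inS S && (xsum x (doutS S) == 1).

Definition Dset : pred vec :=
  [pred v | [exists u : 'I_n, (v == pr (chi (dout u))) || (v == pr (chi (din u)))]].

Definition Tset : pred vec :=
  [pred v | [exists S : {set 'I_n}, inSx S && (v == pr (chi (doutS S)))]].

(* [e1,e2] = chi_{e1} + chi_{e2}  (used only for distinct arcs) *)
Definition br (e1 e2 : darc n) : vec := chi1 e1 + chi1 e2.

Variable A : pred vec.

Definition simA : rel (darc n) := fun e e' =>
  [&& e \in Ex, e' \in Ex &
   [exists eb, [&& eb \in Ex, e != eb, eb != e', br e eb \in A & br eb e' \in A]]].

Definition equivA (e e' : darc n) : bool := [exists e2, simA e e2 && connect simA e2 e'].

Definition circuit_of (e : darc n) : {set darc n} := [set e' in Ex | equivA e e'].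

Definition is_circuit (L : {set darc n}) : Prop :=
  exists2 e, e \in Ex & L = circuit_of e.

Definition nbr (L : {set darc n}) : {set darc n} :=
  [set eb in Ex | [exists e in L, (e != eb) && (br e eb \in A)]].

(* the dual L^*_A: the circuit containing nbr L *)
Definition dual (L : {set darc n}) : {set darc n} :=
  if [pick eb in nbr L] is Some eb then circuit_of eb else set0.

Definition pairLL (L : {set darc n}) : seq vec :=
  [seq br p.1 p.2 | p <- enum [set p : darc n * darc n |
      [&& p.1 \in L, p.2 \in dual L, p.1 != p.2 & br p.1 p.2 \in A]]].

End Setting.

From Pilot Require Import Defs.
From HB Require Import structures.
From mathcomp Require Import all_boot all_order all_algebra.
From mathcomp Require Import zify.
Set Implicit Arguments. Unset Strict Implicit. Unset Printing Implicit Defensive.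
Import Order.TTheory GRing.Theory Num.Theory.
Local Open Scope ring_scope.

(* An arc e of E_x has x_e = 1/2, so its tail star contains exactly one other
   arc of E_x, its mate, and [e, mate e] is the projected tail star, a vector
   of D, hence of A.  Thus ~_A is reflexive on E_x, circuits are equivalence
   classes, and since every A-neighbour of L* lies in L, the mate map injects
   L* into L.
   If e2 is in L*, every vector of <L,L*> lies in the span of the at most
   2|L| - 1 vectors chi_e - chi_e1 for e in L \ e1 and chi_g + chi_e1 for g
   in L*; the dimension hypothesis makes the two spans equal, and [e1,e2] is
   one of these vectors.
   If e2 is not in L*, a linear functional vanishing on <L,L*> separates
   [e1,e2]: the indicator of L minus that of L* when e2 is in L (then L <> L*,
   so the two circuits are disjoint), the e2-coordinate otherwise. *)

Section SpanLinear.
Variables (K : fieldType) (vT : vectType K).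

Lemma span_linear0 (f : {linear vT -> K^o}) (X : seq vT) v :
  {in X, forall u, f u = 0} -> v \in <<X>>%VS -> f v = 0.
Proof.
move=> fX /(@coord_span _ _ _ (in_tuple X)) ->.
rewrite linear_sum big1 // => i _; rewrite linearZ /= fX ?scaler0 //.
exact: mem_nth.
Qed.

Lemma span_sub_dim (U : {vspace vT}) (X : seq vT) :
  (U <= <<X>>)%VS -> (size X <= \dim U)%N -> (<<X>> <= U)%VS.
Proof.
move=> sUX leXU; have [_] := dimv_leqif_eq sUX.
have -> : \dim U == \dim <<X>>.
  by rewrite eqn_leq dimvS // (leq_trans (dim_span X)).
by move/esym/eqP ->.
Qed.

End SpanLinear.

Section WeightedSum.
Variables (T : finType) (R : fieldType) (w : T -> R).

Definition wsum (v : {ffun T -> R^o}) : R^o := \sum_e w e * v e.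

Lemma wsum_is_linear : linear wsum.
Proof.
move=> a u v; rewrite /wsum scaler_sumr -big_split /=; apply: eq_bigr => e _.
by rewrite !ffunE mulrDr mulrCA.
Qed.

HB.instance Definition _ :=
  GRing.isLinear.Build R {ffun T -> R^o} R^o _ wsum wsum_is_linear.

End WeightedSum.

Section Circuits.
Variables (n : nat) (R : realFieldType) (x : darc n -> R) (A : pred (@vec n R)).
Hypotheses (x_out : forall u, xsum x (dout u) = 1) (x_half : half_integral x)
  (DA : {subset Dset x <= A})
  (A_DT : forall v, v \in A -> (v \in Dset x) || (v \in Tset x)).

Local Notation br := (@br n R).
Local Notation chi := (@chi n R).
Local Notation chi1 := (@chi1 n R).
Local Notation Ex := (Ex x).
Local Notation simA := (simA x A).
Local Notation circuit_of := (circuit_of x A).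
Local Notation dual := (dual x A).
Local Notation pairLL := (pairLL x A).

Lemma chi1E a e : chi1 a e = (e == a)%:R.
Proof. by rewrite ffunE inE. Qed.

Lemma brE a b e : br a b e = (e == a)%:R + (e == b)%:R.
Proof. by rewrite ffunE !chi1E. Qed.

Lemma wsum_chi1 (w : darc n -> R) a : wsum w (chi1 a) = w a.
Proof.
rewrite /wsum (bigD1 a) //= chi1E eqxx mulr1 big1 ?addr0 // => e /negbTE ne.
by rewrite chi1E ne mulr0.
Qed.

Lemma wsum_br (w : darc n -> R) a b : wsum w (br a b) = w a + w b.
Proof. by rewrite linearD /= !wsum_chi1. Qed.

Lemma memA_Ex v e : v \in A -> e \notin Ex -> v e = 0.
Proof.
move=> /A_DT /orP [] /existsP [u] => [/orP [] | /andP [_]] /eqP -> eEx;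
  by rewrite ffunE (negbTE eEx).
Qed.

Definition adjA (a b : darc n) := (a != b) && (br a b \in A).

Lemma adjAC a b : adjA a b = adjA b a.
Proof. by rewrite /adjA eq_sym /br addrC. Qed.

Lemma adjA_Ex a b : adjA a b -> (a \in Ex) && (b \in Ex).
Proof.
case/andP=> ab abA; have ba : (b == a) = false by rewrite eq_sym (negbTE ab).
apply/andP; split; apply/negPn/negP => eEx; have := memA_Ex abA eEx;
  by rewrite brE eqxx ?(negbTE ab) ?ba => /eqP; rewrite ?addr0 ?add0r oner_eq0.
Qed.

Lemma simAE a b : simA a b = [exists m, adjA a m && adjA m b].
Proof.
apply/idP/existsP => [/and3P [_ _ /existsP [m /and5P [_ am mb amA mbA]]] | [m]].
  by exists m; rewrite /adjA am mb amA mbA.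
move=> /andP [am mb]; have /andP [aEx mEx] := adjA_Ex am.
have /andP [_ bEx] := adjA_Ex mb.
move: am mb => /andP [am amA] /andP [mb mbA].
by apply/and3P; split=> //; apply/existsP; exists m; apply/and5P.
Qed.

Lemma xE e : x e = (e \in Ex)%:R / 2.
Proof.
rewrite inE; case: (x_half e) => ->; last by rewrite eqxx mul1r.
by rewrite eq_sym invr_eq0 pnatr_eq0 mul0r.
Qed.

Lemma card_Ex_dout u : #|Ex :&: dout u| = 2%N.
Proof.
have := x_out u; rewrite /xsum; under eq_bigr => e _ do rewrite xE.
rewrite -mulr_suml (eq_bigr (fun e => if e \in Ex then 1 else 0)); last first.
  by move=> e _; case: (e \in Ex).
rewrite -big_mkcondr /= sumr_const.
have -> : #|[pred e in dout u | e \in Ex]| = #|Ex :&: dout u|.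
  by apply: eq_card => e; rewrite !inE andbC.
move/(congr1 (fun t => t * 2)); rewrite -mulrA mulVf ?pnatr_eq0 // mulr1 mul1r.
by move/eqP; rewrite (eqr_nat R _ 2) => /eqP.
Qed.

Definition mate (e : darc n) : darc n :=
  odflt e [pick f in Ex :&: dout (tail e) | f != e].

Lemma mateP e : e \in Ex ->
  [/\ mate e \in Ex :&: dout (tail e), mate e != e &
      Ex :&: dout (tail e) = [set e; mate e]].
Proof.
move=> eEx; have eS : e \in Ex :&: dout (tail e) by rewrite in_setI eEx inE eqxx.
have /cards2P [a [b [ab Sab]]] : #|Ex :&: dout (tail e)| == 2%N.
  by rewrite card_Ex_dout.
rewrite /mate; case: pickP => [f /andP [fS fe] | none] /=.
  split=> //; move: eS fS; rewrite Sab !inE.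
  case/orP=> /eqP eE /orP [] /eqP fE; subst e f;
    by [rewrite eqxx in fe | rewrite setUC].
have := none a; have := none b; rewrite Sab !inE !eqxx orbT /=.
by move=> /negbT /negPn /eqP bE /negbT /negPn /eqP aE; rewrite aE bE eqxx in ab.
Qed.

Lemma mate_Ex e : e \in Ex -> mate e \in Ex.
Proof. by case/mateP=> /setIP []. Qed.

Lemma mateK e : e \in Ex -> mate (mate e) = e.
Proof.
move=> eEx; have [/setIP [_]] := mateP eEx; rewrite inE => /eqP tailE _ Se.
have [] := mateP (mate_Ex eEx); rewrite tailE Se !inE.
by case/orP=> /eqP // ->; rewrite eqxx.
Qed.

Lemma adjA_mate e : e \in Ex -> adjA e (mate e).
Proof.
move=> eEx; have [_ ne Se] := mateP eEx.
rewrite /adjA eq_sym ne; apply: DA.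
have -> : br e (mate e) = pr x (chi (dout (tail e))).
  apply/ffunP => f; rewrite brE !ffunE.
  have : (f \in Ex) && (f \in dout (tail e)) = (f == e) || (f == mate e).
    by rewrite -in_setI Se !inE.
  case: ifP => [_ /= -> | _ /esym /norP [/negbTE -> /negbTE ->]]; last first.
    by rewrite addr0.
  by have [->|_] := eqVneq f e; rewrite ?eqxx 1?eq_sym ?(negbTE ne) ?addr0 ?add0r.
by apply/existsP; exists (tail e); rewrite eqxx.
Qed.

Lemma simA_refl e : e \in Ex -> simA e e.
Proof.
by move=> eEx; rewrite simAE; apply/existsP; exists (mate e);
  rewrite adjA_mate // adjAC adjA_mate.
Qed.

Lemma simA_sym : symmetric simA.
Proof.
by move=> a b; rewrite !simAE; apply/existsP/existsP => -[m /andP [am mb]];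
  exists m; rewrite adjAC mb adjAC am.
Qed.

Lemma circuitE a : a \in Ex -> circuit_of a = [set y in Ex | connect simA a y].
Proof.
move=> aEx; apply/setP => y; rewrite !inE; congr (_ && _).
apply/existsP/idP => [[m /andP [am my]] | ay].
  exact: connect_trans (connect1 am) my.
by exists a; rewrite simA_refl.
Qed.

Lemma circuit_Ex a : {subset circuit_of a <= Ex}.
Proof. by move=> y; rewrite inE => /andP []. Qed.

Lemma circuit_eq a b :
  a \in Ex -> b \in circuit_of a -> circuit_of b = circuit_of a.
Proof.
move=> aEx; rewrite circuitE // inE => /andP [bEx ab].
rewrite !circuitE //; apply/setP => y; rewrite !inE.
by rewrite (same_connect (sym_connect_sym simA_sym) ab).
Qed.

(* The middle arcs of a ~_A-path from a to b form one from a' to b'. *)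
Lemma adjA_connect a b a' b' :
  connect simA a b -> adjA a' a -> adjA b b' -> connect simA a' b'.
Proof.
move/connectP=> [p] + -> {b}; elim: p a a' => [|y p IHp] a a' ap a'a lastb'.
  by apply: connect1; rewrite simAE; apply/existsP; exists a; rewrite a'a.
case/andP: ap; rewrite simAE => /existsP [c /andP [ac cy]] yp.
have a'c : simA a' c by rewrite simAE; apply/existsP; exists a; rewrite a'a.
exact: connect_trans (connect1 a'c) (IHp _ _ yp cy lastb').
Qed.

Lemma dualP L : dual L = set0 \/
  exists e0 eb, [/\ e0 \in L, eb \in Ex, adjA e0 eb & dual L = circuit_of eb].
Proof.
rewrite /Defs.dual; case: pickP => [eb ebN | _]; [right | by left].
move: ebN; rewrite inE => /andP [ebEx /existsP [e0 /and3P [e0L ne e0ebA]]].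
by exists e0, eb; rewrite /adjA ne e0ebA.
Qed.

Lemma dual_Ex L : {subset dual L <= Ex}.
Proof.
case: (dualP L) => [-> y | [_ [eb [_ _ _ ->]]]]; last exact: circuit_Ex.
by rewrite inE.
Qed.

Section OneCircuit.
Variable L : {set darc n}.
Hypothesis L_circuit : is_circuit x A L.

Lemma circuit_sub_Ex : {subset L <= Ex}.
Proof. by case: L_circuit => c _ -> y /circuit_Ex. Qed.

Lemma circuit_of_mem y : y \in L -> L = circuit_of y.
Proof. by case: L_circuit => c cEx -> yL; rewrite (circuit_eq cEx yL). Qed.

Lemma dual_disjoint y : L != dual L -> y \in L -> y \notin dual L.
Proof.
move=> LnLs yL; apply: contra LnLs => yLs.
case: (dualP L) yLs => [-> | [_ [eb [_ ebEx _ ->]]] yC]; first by rewrite inE.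
by rewrite (circuit_of_mem yL) (circuit_eq ebEx yC).
Qed.

Lemma adjA_dual g z : g \in dual L -> adjA g z -> z \in L.
Proof.
case: (dualP L) => [-> | [e0 [eb [e0L ebEx e0eb ->]]]]; first by rewrite inE.
rewrite circuitE // inE => /andP [_ ebg] gz; have /andP [_ zEx] := adjA_Ex gz.
rewrite (circuit_of_mem e0L) circuitE ?circuit_sub_Ex // inE zEx.
exact: adjA_connect ebg e0eb gz.
Qed.

Lemma card_dual_le : (#|dual L| <= #|L|)%N.
Proof.
rewrite -(card_in_imset (f := mate)); last first.
  by move=> a b /dual_Ex aEx /dual_Ex bEx ab; rewrite -(mateK aEx) ab mateK.
apply/subset_leq_card/subsetP => _ /imsetP [g gLs ->].
exact: adjA_dual gLs (adjA_mate (dual_Ex gLs)).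
Qed.

Lemma pairLLP v : v \in pairLL L ->
  exists p1 p2, [/\ p1 \in L, p2 \in dual L & v = br p1 p2].
Proof.
by case/mapP=> -[p1 p2]; rewrite mem_enum inE => /and4P [p1L p2Ls _ _] ->;
  exists p1, p2.
Qed.

Definition frame e1 : seq (vec n R) :=
  [seq chi1 e - chi1 e1 | e <- enum (L :\ e1)] ++
  [seq chi1 g + chi1 e1 | g <- enum (dual L)].

Lemma size_frame e1 : e1 \in L -> (size (frame e1) <= 2 * #|L| - 1)%N.
Proof.
move=> e1L; rewrite size_cat !size_map -!cardE.
move: (cardsD1 e1 L) card_dual_le; rewrite e1L add1n.
move: #|L| #|L :\ e1| #|dual L| => a b c; lia.
Qed.

Lemma dual_in_frame e1 g : g \in dual L -> chi1 g + chi1 e1 \in frame e1.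
Proof.
by move=> gLs; rewrite mem_cat; apply/orP; right; apply: map_f; rewrite mem_enum.
Qed.

Lemma span_pairLL_sub e1 : e1 \in L -> (<<pairLL L>> <= <<frame e1>>)%VS.
Proof.
move=> e1L; apply/span_subvP => _ /pairLLP [p1 [p2 [p1L p2Ls ->]]].
have p2F := memv_span (dual_in_frame e1 p2Ls).
have [-> | ne] := eqVneq p1 e1; first by rewrite /Defs.br addrC.
rewrite /Defs.br -[chi1 p1](subrK (chi1 e1)) -addrA [chi1 e1 + _]addrC.
apply: memvD => //; apply/memv_span; rewrite mem_cat; apply/orP; left.
by apply: map_f; rewrite mem_enum !inE ne.
Qed.

Lemma br_in_span_dual e1 e2 :
  \dim <<pairLL L>> = (2 * #|L| - 1)%N -> e1 \in L -> e2 \in dual L ->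
  br e1 e2 \in <<pairLL L>>%VS.
Proof.
move=> dimLL e1L e2Ls.
have frame_sub : (<<frame e1>> <= <<pairLL L>>)%VS.
  by apply: span_sub_dim (span_pairLL_sub e1L) _; rewrite dimLL size_frame.
by apply: subvP frame_sub _ _; rewrite /Defs.br addrC memv_span ?dual_in_frame.
Qed.

Lemma br_notin_span_dual e1 e2 :
  e1 \in L -> e2 \notin dual L -> br e1 e2 \notin <<pairLL L>>%VS.
Proof.
move=> e1L e2Ls; apply/negP => spanP.
have [e2L | e2L] := boolP (e2 \in L).
- have LnLs : L != dual L by apply: contraNneq e2Ls => <-.
  have notLs y : y \in L -> (y \in dual L) = false.
    by move=> yL; apply/negbTE/(dual_disjoint LnLs).
  pose w e : R := (e \in L)%:R - (e \in dual L)%:R.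
  suff /eqP : wsum w (br e1 e2) = 0.
    by rewrite wsum_br /w e1L e2L !notLs // subr0 -natrD pnatr_eq0.
  apply: span_linear0 spanP => _ /pairLLP [p1 [p2 [p1L p2Ls ->]]].
  rewrite /= wsum_br /w p1L p2Ls notLs //.
  have -> : (p2 \in L) = false by apply: contraTF p2Ls; apply: dual_disjoint.
  by rewrite subr0 sub0r subrr.
- have neq_e2 y : y \in L -> (y == e2) = false.
    by move=> yL; apply: contraNF e2L => /eqP <-.
  suff /eqP : wsum (fun e => (e == e2)%:R) (br e1 e2) = 0.
    by rewrite wsum_br eqxx neq_e2 // add0r oner_eq0.
  apply: span_linear0 spanP => _ /pairLLP [p1 [p2 [p1L p2Ls ->]]].
  rewrite /= wsum_br neq_e2 //.
  have -> : (p2 == e2) = false by apply: contraNF e2Ls => /eqP <-.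
  by rewrite addr0.
Qed.

End OneCircuit.
End Circuits.

Theorem mainTheorem7 (n : nat) (R : realFieldType) (x : darc n -> R)
  (A : pred (@vec n R)) (L : {set darc n}) (e1 e2 : darc n) :
  (4 <= n)%N ->
  inPn x -> half_integral x ->
  {subset Dset x <= A} ->
  (forall v, v \in A -> (v \in Dset x) || (v \in Tset x)) ->
  is_circuit x A L ->
  \dim <<pairLL x A L>>%VS = (2 * #|L| - 1)%N ->
  e1 != e2 ->
  @br n R e1 e2 \in Tset x -> @br n R e1 e2 \notin A -> e1 \in L ->
  (@br n R e1 e2 \notin <<pairLL x A L>>%VS) <-> (e2 \notin dual x A L).
Proof.
move=> _ [x_out _ _ _] x_half DA A_DT L_circuit dimLL _ _ _ e1L.
split=> [|e2Ls]; last exact: br_notin_span_dual.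
by apply: contra => e2Ls; apply: br_in_span_dual.
Qed.
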